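(* Under the hypotheses and with the notation of the context, the function $\nu\colon K\times K\to\widehat H$, $\nu(y_1,y_2)(h)=\tilde\nu(y_1,y_2)(h)(1)$ (i.e. $\nu=\psi_1\circ\tilde\nu$), takes values in $\widehat H$ and satisfies $\nu(y_2,y_3)\,\nu(y_1y_2,y_3)^{-1}\,\nu(y_1,y_2y_3)\,\big(\nu(y_1,y_2)^{y_3}\big)^{-1}=1$, hence defines an element of $\underline H^2(K,\widehat H)$.
   Context: $k$ algebraically closed of characteristic $0$; $G$ finite, $\omega\in Z^3(G,k^\times)$ normalized; $H\trianglelefteq G$ abelian; $K=G/H$, $p(g)=Hg$, $u\colon K\to G$ a section with $u(p(1_G))=1_G$, $x\triangleleft g=p(u(x)g)$. $C=\mathrm{Fun}(K,k^\times)$ with left $G$-action $(g\triangleright f)(x)=f(x\triangleleft g)$; normalized cochains, multiplicative coboundary $\delta$. $\mu\in C^2(G,C)$ with $\delta^2\mu=\omega$, and ${}^y\mu/\mu$ trivial in $H^2(G,C)$ for all $y\in K$, where $({}^y\gamma)(g_1,\dots,g_n)(x)=\gamma(g_1,\dots,g_n)(yx)$. For each $y\in K$, $\eta_y\in C^1(G,C)$ with $\delta^1\eta_y={}^y\mu/\mu$, and $\tilde\nu(y_1,y_2)={}^{y_2}\eta_{y_1}\eta_{y_2}/\eta_{y_1y_2}\in Z^1(G,C)$. $\widehat H=\mathrm{Hom}(H,k^\times)$ is a right $K$-module via $\rho^y(h)=\rho(u(y)hu(y)^{-1})$. $\underline H^2(K,\widehat H)$ is the second cohomology with coboundary $(\underline\delta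 f)(y_1,\dots,y_{n+1})=f(y_2,\dots)\prod_i f(\dots,y_iy_{i+1},\dots)^{(-1)^i}(f(y_1,\dots,y_n)^{y_{n+1}})^{(-1)^{n+1}}$. *)

From HB Require Import structures.
From mathcomp Require Import all_boot all_order all_algebra all_fingroup.
Set Implicit Arguments. Unset Strict Implicit. Unset Printing Implicit Defensive.
Import GRing.Theory.

(* G is a subgroup of a finGroupType gT, H <| G abelian,
   K = G / H (quotient, elements of type coset_of H), p = coset H,
   u : coset_of H -> gT the section.  k^x is encoded as the nonzero elements
   of k.  An element of C = Fun(K, k^x) is a function coset_of H -> k
   (only its values on K matter).  A cochain in C^n(G,C) is a curried
   function of n elements of gT (only values on G matter). *)

Section Defs.
Variables (k : fieldType) (gT : finGroupType) (H : {group gT}).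
Variable u : coset_of H -> gT.

Definition ract (x : coset_of H) (g : gT) : coset_of H := coset H (u x * g)%g.

Definition lactC (g : gT) (f : coset_of H -> k) : coset_of H -> k :=
  fun x => f (ract x g).

Local Open Scope ring_scope.

Definition cobound1 (eta : gT -> coset_of H -> k) (g1 g2 : gT) :
    coset_of H -> k :=
  fun x => lactC g1 (eta g2) x * (eta (g1 * g2)%g x)^-1 * eta g1 x.

Definition cobound2 (mu : gT -> gT -> coset_of H -> k) (g1 g2 g3 : gT) :
    coset_of H -> k :=
  fun x => lactC g1 (mu g2 g3) x * (mu (g1 * g2)%g g3 x)^-1
           * mu g1 (g2 * g3)%g x * (mu g1 g2 x)^-1.

Definition shift2 (y : coset_of H) (mu : gT -> gT -> coset_of H -> k) :
    gT -> gT -> coset_of H -> k :=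
  fun g1 g2 x => mu g1 g2 (y * x)%g.

Definition shift1 (y : coset_of H) (eta : gT -> coset_of H -> k) :
    gT -> coset_of H -> k :=
  fun g x => eta g (y * x)%g.

Definition nutilde (eta : coset_of H -> gT -> coset_of H -> k)
    (y1 y2 : coset_of H) : gT -> coset_of H -> k :=
  fun g x => shift1 y2 (eta y1) g x * eta y2 g x * (eta (y1 * y2)%g g x)^-1.

Definition nu (eta : coset_of H -> gT -> coset_of H -> k)
    (y1 y2 : coset_of H) : gT -> k :=
  fun h => nutilde eta y1 y2 h 1%g.

Definition hat_ract (rho : gT -> k) (y : coset_of H) : gT -> k :=
  fun h => rho (u y * h * (u y)^-1)%g.

End Defs.

Definition is_hat (k : fieldType) (gT : finGroupType) (H : {set gT})
    (rho : gT -> k) : Prop :=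
  {in H, forall h, rho h != 0%R} /\
  {in H &, forall a b, rho (a * b)%g = (rho a * rho b)%R}.

From Pilot Require Import Defs.
From mathcomp Require Import all_boot all_order all_algebra all_fingroup.
From mathcomp Require Import ring.
Set Implicit Arguments. Unset Strict Implicit. Unset Printing Implicit Defensive.
Import GRing.Theory.
Local Open Scope ring_scope.

(* Since delta^1 eta_y = {}^y mu / mu, the mu-factors in delta^1 nu~(y1,y2)
   cancel, so each nu~(y1,y2) is a 1-cocycle of G in C.  On H, which acts
   trivially on K, the cocycle law at the point 1 says that nu(y1,y2) is a
   character of H; combining it at u(y3) h = (u(y3) h u(y3)^-1) u(y3) shows
   that nu~(y1,y2)(h)(y3) = nu(y1,y2)^{y3}(h).  After this substitution the
   2-cocycle identity only involves shifted eta's and is a field identity. *)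

Section QuotientAction.

Variables (gT : finGroupType) (G H : {group gT}).
Hypothesis nHG : (H <| G)%g.
Variable u : coset_of H -> gT.
Hypothesis u_in : forall y, y \in (G / H)%g -> u y \in G.
Hypothesis u_sec : forall y, y \in (G / H)%g -> coset H (u y) = y.

Let nH g : g \in G -> g \in 'N(H)%g.
Proof. exact: subsetP (normal_norm nHG) g. Qed.

Let sHG h : h \in H -> h \in G.
Proof. exact: subsetP (normal_sub nHG) h. Qed.

Lemma ractE x g : x \in (G / H)%g -> g \in G -> Defs.ract u x g = (x * coset H g)%g.
Proof. by move=> xK gG; rewrite /Defs.ract morphM ?nH ?u_in //= u_sec. Qed.

Lemma ract_in x g : x \in (G / H)%g -> g \in G -> Defs.ract u x g \in (G / H)%g.
Proof. by move=> xK gG; rewrite ractE // groupM ?mem_quotient. Qed.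

Lemma ractMl y x g : y \in (G / H)%g -> x \in (G / H)%g -> g \in G ->
  Defs.ract u (y * x)%g g = (y * Defs.ract u x g)%g.
Proof. by move=> yK xK gG; rewrite !ractE ?groupM // mulgA. Qed.

Lemma ract_sub x h : x \in (G / H)%g -> h \in H -> Defs.ract u x h = x.
Proof. by move=> xK hH; rewrite ractE ?sHG // coset_id // mulg1. Qed.

Lemma ract1_section y : y \in (G / H)%g -> Defs.ract u 1%g (u y) = y.
Proof. by move=> yK; rewrite ractE ?u_in // mul1g u_sec. Qed.

Section TwistedCocycle.

Variable k : fieldType.
Variables (mu : gT -> gT -> coset_of H -> k)
          (eta : coset_of H -> gT -> coset_of H -> k).
Hypothesis mu_nz : forall g1 g2 x, g1 \in G -> g2 \in G -> x \in (G / H)%g ->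
  mu g1 g2 x != 0.
Hypothesis eta_nz : forall y g x, y \in (G / H)%g -> g \in G ->
  x \in (G / H)%g -> eta y g x != 0.
Hypothesis eta_cob : forall y g1 g2 x,
  y \in (G / H)%g -> g1 \in G -> g2 \in G -> x \in (G / H)%g ->
  cobound1 u (eta y) g1 g2 x = shift2 y mu g1 g2 x / mu g1 g2 x.

Lemma etaM y g1 g2 x : y \in (G / H)%g -> g1 \in G -> g2 \in G ->
    x \in (G / H)%g ->
  eta y (g1 * g2)%g x =
  eta y g2 (Defs.ract u x g1) * eta y g1 x * mu g1 g2 x / mu g1 g2 (y * x)%g.
Proof.
move=> yK g1G g2G xK; have := eta_cob yK g1G g2G xK.
rewrite /cobound1 /lactC /shift2.
set a := eta y g2 _; set c := eta y _ x; set b := eta y g1 x => E.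
have c_nz : c != 0 by rewrite eta_nz ?groupM.
have [mux_nz muyx_nz] := (mu_nz g1G g2G xK, mu_nz g1G g2G (groupM yK xK)).
have -> : a * b = (a * c^-1 * b) * c by field.
by rewrite E; field; rewrite mux_nz muyx_nz.
Qed.

Lemma nutilde_neq0 y1 y2 g x : y1 \in (G / H)%g -> y2 \in (G / H)%g ->
  g \in G -> x \in (G / H)%g -> nutilde eta y1 y2 g x != 0.
Proof.
move=> y1K y2K gG xK; rewrite /nutilde /shift1.
by rewrite !mulf_neq0 ?invr_neq0 ?eta_nz ?groupM.
Qed.

Lemma nutildeM y1 y2 g1 g2 x : y1 \in (G / H)%g -> y2 \in (G / H)%g ->
    g1 \in G -> g2 \in G -> x \in (G / H)%g ->
  nutilde eta y1 y2 (g1 * g2)%g x =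
  nutilde eta y1 y2 g2 (Defs.ract u x g1) * nutilde eta y1 y2 g1 x.
Proof.
move=> y1K y2K g1G g2G xK.
have y12K : (y1 * y2)%g \in (G / H)%g by rewrite groupM.
rewrite /nutilde /shift1 !etaM ?groupM // ractMl // mulgA.
have rK := ract_in xK g1G.
have n1 := mu_nz g1G g2G (groupM y2K xK).
have n2 := mu_nz g1G g2G (groupM y12K xK).
have n3 := mu_nz g1G g2G xK.
have n4 := eta_nz y12K g2G rK.
have n5 := eta_nz y12K g1G xK.
by field; rewrite n1 n2 n3 n4 n5.
Qed.

Lemma nu_is_hat y1 y2 : y1 \in (G / H)%g -> y2 \in (G / H)%g ->
  is_hat H (nu eta y1 y2).
Proof.
move=> y1K y2K; split=> [h hH | a b aH bH]; rewrite /nu.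
  by rewrite nutilde_neq0 ?sHG.
by rewrite nutildeM ?sHG // ract_sub // mulrC.
Qed.

Lemma nutilde_hat_ract y1 y2 y3 h : y1 \in (G / H)%g -> y2 \in (G / H)%g ->
    y3 \in (G / H)%g -> h \in H ->
  nutilde eta y1 y2 h y3 = hat_ract u (nu eta y1 y2) y3 h.
Proof.
move=> y1K y2K y3K hH; rewrite /hat_ract /nu.
set v := u y3; set c := (v * h * v^-1)%g.
have vG : v \in G by exact: u_in.
have cH : c \in H.
  by rewrite (_ : c = h ^ v^-1)%g ?memJ_norm ?groupV ?nH // /conjg invgK mulgA.
have [hG cG] := (sHG hH, sHG cH).
have cv_vh : (c * v)%g = (v * h)%g by rewrite /c mulgKV.
apply: (@mulfI _ (nutilde eta y1 y2 v 1%g)); first by rewrite nutilde_neq0.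
have := nutildeM y1K y2K vG hG (group1 _); rewrite -cv_vh ract1_section //.
by rewrite nutildeM // ract_sub // => ->; rewrite mulrC.
Qed.

Lemma nu_cocycle y1 y2 y3 h : y1 \in (G / H)%g -> y2 \in (G / H)%g ->
    y3 \in (G / H)%g -> h \in H ->
  nu eta y2 y3 h * (nu eta (y1 * y2)%g y3 h)^-1 * nu eta y1 (y2 * y3)%g h
    * (hat_ract u (nu eta y1 y2) y3 h)^-1 = 1.
Proof.
move=> y1K y2K y3K hH.
rewrite -nutilde_hat_ract // /nu /nutilde /shift1 !mulg1 !mulgA.
have [hG oK] := (sHG hH, group1 [group of (G / H)%g]).
have [y12K y23K] := (groupM y1K y2K, groupM y2K y3K).
have n1 := eta_nz y2K hG y3K.
have n2 := eta_nz y3K hG oK.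
have n3 := eta_nz y23K hG oK.
have n4 := eta_nz y12K hG y3K.
have n5 := eta_nz (groupM y12K y3K) hG oK.
have n6 := eta_nz y1K hG y23K.
by field; rewrite n1 n2 n3 n4 n5 n6.
Qed.

End TwistedCocycle.

End QuotientAction.

Theorem corollary4p3
  (k : closedFieldType) (hk0 : [pchar k] =i pred0)
  (gT : finGroupType) (G H : {group gT})
  (nHG : (H <| G)%g) (abH : abelian H)
  (u : coset_of H -> gT)
  (u_in : forall y, y \in (G / H)%g -> u y \in G)
  (u_sec : forall y, y \in (G / H)%g -> coset H (u y) = y)
  (u1 : u (coset H 1%g) = 1%g)
  (* omega in Z^3(G, k^x), normalized *)
  (omega : gT -> gT -> gT -> k)
  (omega_nz : forall g1 g2 g3, g1 \in G -> g2 \in G -> g3 \in G ->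
     omega g1 g2 g3 != 0)
  (omega_norm : forall g1 g2, g1 \in G -> g2 \in G ->
     [/\ omega 1%g g1 g2 = 1, omega g1 1%g g2 = 1 & omega g1 g2 1%g = 1])
  (omega_cocycle : forall g1 g2 g3 g4,
     g1 \in G -> g2 \in G -> g3 \in G -> g4 \in G ->
     omega g2 g3 g4 * (omega (g1 * g2)%g g3 g4)^-1 * omega g1 (g2 * g3)%g g4
       * (omega g1 g2 (g3 * g4)%g)^-1 * omega g1 g2 g3 = 1)
  (* mu in C^2(G, C), normalized, with delta^2 mu = omega *)
  (mu : gT -> gT -> coset_of H -> k)
  (mu_nz : forall g1 g2 x, g1 \in G -> g2 \in G -> x \in (G / H)%g ->
     mu g1 g2 x != 0)
  (mu_norm : forall g x, g \in G -> x \in (G / H)%g ->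
     mu 1%g g x = 1 /\ mu g 1%g x = 1)
  (mu_omega : forall g1 g2 g3 x,
     g1 \in G -> g2 \in G -> g3 \in G -> x \in (G / H)%g ->
     cobound2 u mu g1 g2 g3 x = omega g1 g2 g3)
  (* eta_y in C^1(G, C), normalized, with delta^1 eta_y = {}^y mu / mu *)
  (eta : coset_of H -> gT -> coset_of H -> k)
  (eta_nz : forall y g x, y \in (G / H)%g -> g \in G -> x \in (G / H)%g ->
     eta y g x != 0)
  (eta_norm : forall y x, y \in (G / H)%g -> x \in (G / H)%g ->
     eta y 1%g x = 1)
  (eta_cob : forall y g1 g2 x,
     y \in (G / H)%g -> g1 \in G -> g2 \in G -> x \in (G / H)%g ->
     cobound1 u (eta y) g1 g2 x = shift2 y mu g1 g2 x / mu g1 g2 x) :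
  (forall y1 y2, y1 \in (G / H)%g -> y2 \in (G / H)%g ->
     is_hat H (nu eta y1 y2)) /\
  (forall y1 y2 y3 h,
     y1 \in (G / H)%g -> y2 \in (G / H)%g -> y3 \in (G / H)%g -> h \in H ->
     nu eta y2 y3 h * (nu eta (y1 * y2)%g y3 h)^-1 * nu eta y1 (y2 * y3)%g h
       * (hat_ract u (nu eta y1 y2) y3 h)^-1 = 1).
Proof.
split.
  exact: (nu_is_hat nHG u_in u_sec mu_nz eta_nz eta_cob).
exact: (nu_cocycle nHG u_in u_sec mu_nz eta_nz eta_cob).
Qed.
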